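(* Let $p$ be a prime, $X$ a countable set, and let $A$ be a norm-closed sub-$\mathbb{Z}_p$-algebra of $\mathcal{B}(\mathbb{Q}_p(X))$ containing the identity. Let $e,f\in A$ be idempotents with $e\ne0$ and $\|e-f\|<1/\|e\|$. Then there is an invertible element $g\in A$ (with $g^{-1}\in A$) such that $g^{-1}eg=f$.
   Context: $\mathbb{Q}_p(X)$ is the set of maps $\xi:X\to\mathbb{Q}_p$ with $|\xi(i)|_p\le1$ for all but finitely many $i$, a $\mathbb{Z}_p$-module under coordinatewise operations, with the topology $\tau$ in which $A\subseteq\mathbb{Q}_p(X)$ is open iff for every finite $P\subseteq X$ the set $A\cap\big(\prod_{i\in P}\mathbb{Q}_p\times\prod_{j\in X\setminus P}\mathbb{Z}_p\big)$ is open in the product topology. $\mathcal{B}(\mathbb{Q}_p(X))$ is the algebra of $\tau$-continuous $\mathbb{Z}_p$-linear maps, with operator norm $\|T\|=\sup_{\|\xi\|\le1}\|T\xi\|$, $\|\xi\|=\max_i|\xi(i)|_p$. *)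

From HB Require Import structures.
From mathcomp Require Import all_boot all_order all_algebra.
From mathcomp Require Import boolp classical_sets functions cardinality reals.
Set Implicit Arguments. Unset Strict Implicit. Unset Printing Implicit Defensive.
Import Order.TTheory GRing.Theory Num.Theory.
Local Open Scope classical_set_scope.
Local Open Scope ring_scope.

(* The field Q_p.  (K, abs) is a model of the p-adic numbers: a complete   *)
(* non-archimedean valued field in which Q is dense and |p| = 1/p.  By     *)
(* Ostrowski's theorem such a pair is isometrically isomorphic to          *)
(* (Q_p, |.|_p), i.e. it is the completion of Q for the p-adic absolute    *)
Definition is_padic_field (p : nat) (R : realType) (K : fieldType)
    (abs : K -> R) : Prop :=
  (forall x : K, 0 <= abs x) /\
  (forall x : K, abs x = 0 <-> x = 0) /\
  (forall x y : K, abs (x * y) = abs x * abs y) /\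
  (forall x y : K, abs (x + y) <= Num.max (abs x) (abs y)) /\
  abs (p%:R) = (p%:R)^-1 /\
  (forall u : nat -> K,
     (forall eps : R, 0 < eps -> exists N : nat, forall m n : nat,
         (N <= m)%N -> (N <= n)%N -> abs (u m - u n) < eps) ->
     exists l : K, forall eps : R, 0 < eps ->
       exists N : nat, forall n : nat, (N <= n)%N -> abs (u n - l) < eps) /\
  (forall (x : K) (eps : R), 0 < eps -> exists q : rat, abs (x - ratr q) < eps).

Section QpX.
Variables (R : realType) (K : fieldType) (abs : K -> R) (X : Type).

Definition in_Zp (a : K) : Prop := abs a <= 1.

Record qvec := QVec {
  qv :> X -> K ;
  qv_fin : finite_set [set i | 1 < abs (qv i)] }.

(* sup norm ||u|| = max_i |u(i)|_p (0 for X empty) *)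
Definition vnorm (u : X -> K) : R := sup ([set 0] `|` range (fun i => abs (u i))).

(* operator norm; operators are compared as functions into X -> K so that  *)
(* differences need not be repackaged as elements of Q_p(X) *)
Definition opnorm (T : qvec -> (X -> K)) : R :=
  sup [set vnorm (T xi) | xi in [set xi : qvec | vnorm xi <= 1]].

Definition op_sub (T S : qvec -> qvec) : qvec -> (X -> K) :=
  fun xi i => T xi i - S xi i.

Definition in_SP (P : set X) (b : qvec) : Prop := forall j, ~ P j -> in_Zp (b j).

(* U \cap S_P is open in the product topology of S_P *)
Definition rel_open_SP (P : set X) (U : set qvec) : Prop :=
  forall a : qvec, in_SP P a -> U a ->
    exists F : set X, finite_set F /\
    exists eps : R, 0 < eps /\
      forall b : qvec, in_SP P b -> (forall i, F i -> abs (b i - a i) < eps) -> U b.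

Definition tau_open (U : set qvec) : Prop :=
  forall P : set X, finite_set P -> rel_open_SP P U.

Definition tau_continuous (T : qvec -> qvec) : Prop :=
  forall U : set qvec, tau_open U -> tau_open (T @^-1` U).

Definition Zp_linear (T : qvec -> qvec) : Prop :=
  (forall xi eta zeta : qvec, (forall i, zeta i = xi i + eta i) ->
      forall i, T zeta i = T xi i + T eta i) /\
  (forall (a : K) (xi zeta : qvec), in_Zp a -> (forall i, zeta i = a * xi i) ->
      forall i, T zeta i = a * T xi i).

Definition in_B (T : qvec -> qvec) : Prop := Zp_linear T /\ tau_continuous T.

Definition unital_subalgebra (A : set (qvec -> qvec)) : Prop :=
  (forall T, A T -> in_B T) /\
  A id /\
  (forall T S, A T -> A S -> exists U, A U /\ forall xi i, U xi i = T xi i + S xi i) /\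
  (forall (a : K) T, in_Zp a -> A T -> exists U, A U /\ forall xi i, U xi i = a * T xi i) /\
  (forall T S, A T -> A S -> A (T \o S)).

Definition norm_closed (A : set (qvec -> qvec)) : Prop :=
  forall T, in_B T ->
    (forall eps : R, 0 < eps -> exists S, A S /\ opnorm (op_sub S T) < eps) -> A T.

End QpX.

From HB Require Import structures.
From mathcomp Require Import all_boot all_order all_algebra.
From mathcomp Require Import boolp classical_sets functions cardinality reals.
From mathcomp Require Import ring lra.
Import Order.TTheory GRing.Theory Num.Theory.
Local Open Scope classical_set_scope.
Local Open Scope ring_scope.
Set Implicit Arguments. Unset Strict Implicit. Unset Printing Implicit Defensive.

(* The intertwiner [z = ef + (1 - e)(1 - f)] satisfies [e z = ef = z f], so it suffices to
   show that [z] is invertible in [A].  The absolute value is discrete, |K^*| = p^Z (by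
   density of Q), hence a nonzero idempotent [e] maps the unit ball into a ball of radius
   p^k <= ||e||, and ||e - f|| < 1/||e|| forces [e - f] into the ball of radius p^-(k+1).
   Then [1 - z = e(e - f) - (e - f)f] maps the unit ball into the ball of radius 1/p, so the
   Neumann series of [1 - z] converges coordinatewise, uniformly on the unit ball.  Its
   limit is tau-continuous, lies in [A] because [A] is norm closed, and inverts [z]. *)

(** * The discrete absolute value *)

Section PadicAbsolute.
Variables (p : nat) (R : realType) (K : fieldType) (abs : K -> R).
Hypotheses (p_prime : prime p) (padicK : is_padic_field p abs).
Local Notation P := (p%:R : R).

Lemma abs_ge0 x : 0 <= abs x. Proof. by case: padicK. Qed.
Lemma abs_eq0 x : abs x = 0 <-> x = 0. Proof. by case: padicK => _ []. Qed.
Lemma absM x y : abs (x * y) = abs x * abs y. Proof. by case: padicK => _ [] _ []. Qed.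
Lemma abs_ultra x y : abs (x + y) <= Num.max (abs x) (abs y).
Proof. by case: padicK => _ [] _ [] _ []. Qed.
Lemma abs_p : abs p%:R = P^-1. Proof. by case: padicK => _ [] _ [] _ [] _ []. Qed.

Lemma abs_complete (u : nat -> K) :
  (forall eps, 0 < eps -> exists N, forall m n, (N <= m)%N -> (N <= n)%N ->
     abs (u m - u n) < eps) ->
  exists l, forall eps, 0 < eps -> exists N, forall n, (N <= n)%N -> abs (u n - l) < eps.
Proof. by case: padicK => _ [] _ [] _ [] _ [] _ [] complete _; apply: complete. Qed.

Lemma abs_ratr_dense x eps : 0 < eps -> exists q : rat, abs (x - ratr q) < eps.
Proof. by case: padicK => _ [] _ [] _ [] _ [] _ [] _ dense; apply: dense. Qed.

Lemma abs0 : abs 0 = 0. Proof. exact/abs_eq0. Qed.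

Lemma abs_gt0 x : x != 0 -> 0 < abs x.
Proof. by move=> x0; rewrite lt_def abs_ge0 andbT; apply: contra x0 => /eqP/abs_eq0->. Qed.

Lemma abs1 : abs 1 = 1.
Proof.
have a1 : abs 1 != 0 by rewrite gt_eqF // abs_gt0 ?oner_eq0.
by apply: (mulfI a1); rewrite -absM !mulr1.
Qed.

Lemma absN x : abs (- x) = abs x.
Proof.
have absN1 : abs (-1) = 1.
  have : abs (-1) * abs (-1) = 1 by rewrite -absM mulrNN mulr1 abs1.
  have := abs_ge0 (-1); nra.
by rewrite -mulN1r absM absN1 mul1r.
Qed.

Lemma absV x : abs x^-1 = (abs x)^-1.
Proof.
have [->|x0] := eqVneq x 0; first by rewrite invr0 abs0 invr0.
apply: (mulfI (lt0r_neq0 (abs_gt0 x0))).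
by rewrite -absM !mulfV ?abs1 ?lt0r_neq0 ?abs_gt0.
Qed.

Lemma abs_add_le x y c : abs x <= c -> abs y <= c -> abs (x + y) <= c.
Proof. by move=> hx hy; apply: le_trans (abs_ultra x y) _; rewrite ge_max hx. Qed.
Lemma abs_add_lt x y c : abs x < c -> abs y < c -> abs (x + y) < c.
Proof. by move=> hx hy; apply: le_lt_trans (abs_ultra x y) _; rewrite gt_max hx. Qed.
Lemma abs_sub_le x y c : abs x <= c -> abs y <= c -> abs (x - y) <= c.
Proof. by move=> hx hy; apply: abs_add_le; rewrite ?absN. Qed.
Lemma abs_sub_lt x y c : abs x < c -> abs y < c -> abs (x - y) < c.
Proof. by move=> hx hy; apply: abs_add_lt; rewrite ?absN. Qed.

Lemma P_gt1 : 1 < P. Proof. by rewrite ltr1n prime_gt1. Qed.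
Lemma P_gt0 : 0 < P. Proof. exact: lt_trans ltr01 P_gt1. Qed.
Lemma invP_gt0 : 0 < P^-1. Proof. by rewrite invr_gt0 P_gt0. Qed.
Lemma invP_ge0 : 0 <= P^-1. Proof. exact: ltW invP_gt0. Qed.
Lemma invP_lt1 : P^-1 < 1. Proof. by rewrite invf_lt1 ?P_gt0 ?P_gt1. Qed.
Lemma Pexp_ge1 n : 1 <= P ^+ n. Proof. by rewrite exprn_ege1 // ltW // P_gt1. Qed.
Lemma Pexp_gt0 n : 0 < P ^+ n. Proof. exact: lt_le_trans ltr01 (Pexp_ge1 n). Qed.
Lemma invPexp_le1 n : (P ^+ n)^-1 <= 1. Proof. by rewrite invf_le1 ?Pexp_gt0 ?Pexp_ge1. Qed.
Lemma invPexp_ge0 n : 0 <= (P ^+ n)^-1. Proof. by rewrite invr_ge0 ltW ?Pexp_gt0. Qed.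

Lemma abs_pexp n : abs (p%:R ^+ n) = (P ^+ n)^-1.
Proof.
elim: n => [|n IH]; first by rewrite !expr0 abs1 invr1.
by rewrite !exprS absM IH abs_p invfM.
Qed.

Lemma p_neq0 : (p%:R : K) != 0.
Proof. by apply/eqP => /abs_eq0/eqP; rewrite abs_p invr_eq0 gt_eqF ?P_gt0. Qed.

Lemma pexp_neq0 n : (p%:R : K) ^+ n != 0.
Proof. exact: expf_neq0 p_neq0. Qed.

Lemma abs_natr_le1 n : abs n%:R <= 1.
Proof. by elim: n => [|n IH]; rewrite ?abs0 ?ler01 // -addn1 natrD abs_add_le ?abs1. Qed.

Lemma abs_natr_coprime n : coprime p n -> abs n%:R = 1.
Proof.
move=> pn; apply/eqP; rewrite eq_le abs_natr_le1 leNgt; apply/negP => lt1.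
have [a _] := Bezoutl n (prime_gt0 p_prime).
rewrite (eqP pn) => /dvdnP [k hk].
have bezout : (1 : K) = k%:R * p%:R - a%:R * n%:R by rewrite -!natrM -hk natrD addrK.
suff: abs (1 : K) < 1 by rewrite abs1 ltxx.
rewrite bezout; apply: abs_sub_lt; rewrite absM.
  rewrite abs_p; apply: le_lt_trans invP_lt1.
  by apply: ler_piMl; [exact: invP_ge0 | exact: abs_natr_le1].
by apply: le_lt_trans lt1; apply: ler_piMl; rewrite ?abs_ge0 ?abs_natr_le1.
Qed.

Lemma abs_natr_dvd n : (p %| n)%N -> abs n%:R <= P^-1.
Proof.
move=> /dvdnP [m ->]; rewrite natrM absM abs_p.
by apply: ler_piMl; [exact: invP_ge0 | exact: abs_natr_le1].
Qed.

Lemma abs_intr (z : int) : abs z%:~R = abs `|z|%:R.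
Proof. by case: z => n //; rewrite NegzE mulrNz absN. Qed.

(* With q = m/d in lowest terms, |q| < 1 forces p | m, hence p does not divide d. *)
Lemma abs_ratr_lt1_discrete (q : rat) : abs (ratr q : K) < 1 -> abs (ratr q : K) <= P^-1.
Proof.
rewrite /ratr absM absV !abs_intr.
have [->|dq0] := eqVneq (`|denq q|%:R : K) 0.
  by rewrite abs0 invr0 mulr0 => _; exact: invP_ge0.
have dq_gt0 := abs_gt0 dq0.
have [pn|pn] := boolP (coprime p `|numq q|).
  rewrite abs_natr_coprime // mul1r invf_lt1 //.
  by rewrite ltNge abs_natr_le1.
rewrite prime_coprime // negbK in pn.
have pd := coprime_dvdl pn (coprime_num_den q).
rewrite (abs_natr_coprime pd) invr1 mulr1 => _.
exact: abs_natr_dvd.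
Qed.

Lemma abs_lt1_discrete x : abs x < 1 -> abs x <= P^-1.
Proof.
move=> x1; have [q xq] := abs_ratr_dense x invP_gt0.
have q1 : abs (ratr q : K) < 1.
  by rewrite -[ratr q](subKr x); apply: abs_sub_lt => //; apply: lt_trans xq invP_lt1.
by rewrite -(subrK (ratr q) x); apply: abs_add_le; [exact: ltW | exact: abs_ratr_lt1_discrete].
Qed.

Lemma abs_lt_discrete x c : abs x < abs c -> abs x <= abs c / P.
Proof.
move=> xc; have c0 : c != 0 by apply: contraTneq xc => ->; rewrite abs0 -leNgt abs_ge0.
have := @abs_lt1_discrete (x / c); rewrite absM absV ltr_pdivrMr ?ler_pdivrMr ?abs_gt0 // mul1r.
by rewrite mulrC; apply.
Qed.

Lemma Pexp_unbounded r : exists n, r < P ^+ n.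
Proof.
have r0 : 0 <= Num.max r 0 by rewrite le_max lexx orbT.
exists (Num.Def.archi_bound (Num.max r 0)).
apply: le_lt_trans (_ : r <= Num.max r 0) _; first by rewrite le_max lexx.
apply: lt_le_trans (archi_boundP r0) _.
by rewrite -natrX ler_nat ltnW // ltn_expl // prime_gt1.
Qed.

Lemma invPexp_lt eps : 0 < eps -> exists n, (P ^+ n)^-1 < eps.
Proof.
move=> eps0; have [n epsn] := Pexp_unbounded eps^-1.
by exists n; rewrite -[eps]invrK ltf_pV2 ?posrE ?invr_gt0 ?Pexp_gt0.
Qed.

Lemma abs_pexp_lt (a : K) eps : 0 < eps -> exists n, abs (p%:R ^+ n * a) < eps.
Proof.
move=> eps0; have [n an] := Pexp_unbounded (abs a / eps).
exists n; rewrite absM abs_pexp mulrC ltr_pdivrMr ?Pexp_gt0 //.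
by rewrite -ltr_pdivrMl // mulrC.
Qed.

Lemma eq0_of_abs_le_pexp (y a : K) : (forall n, abs y <= abs (p%:R ^+ n * a)) -> y = 0.
Proof.
move=> ya; apply/abs_eq0/eqP; rewrite eq_le abs_ge0 andbT leNgt; apply/negP => y0.
by have [n] := abs_pexp_lt a y0; rewrite ltNge ya.
Qed.

Lemma abs_pexpM_le (a : K) n m : (n <= m)%N -> abs (p%:R ^+ m * a) <= abs (p%:R ^+ n * a).
Proof.
move=> nm; rewrite !absM !abs_pexp ler_wpM2r ?abs_ge0 // lef_pV2 ?posrE ?Pexp_gt0 //.
by rewrite ler_eXn2l ?P_gt1.
Qed.

Definition cvg_to (u : nat -> K) (l : K) :=
  forall eps, 0 < eps -> exists N, forall n, (N <= n)%N -> abs (u n - l) < eps.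

(* [xget] returns the junk value 0 when [u] does not converge. *)
Definition limit (u : nat -> K) : K := xget 0 (cvg_to u).

Lemma limit_pexp_tail (u : nat -> K) (a : K) :
  (forall n m, (n <= m)%N -> abs (u m - u n) <= abs (p%:R ^+ n * a)) ->
  forall n, abs (limit u - u n) <= abs (p%:R ^+ n * a).
Proof.
move=> u_cauchy; have u_cvg : cvg_to u (limit u).
  apply: xgetPex; apply: abs_complete => eps eps0.
  have [N epsN] := abs_pexp_lt a eps0; exists N => m n Nm Nn.
  have -> : u m - u n = (u m - u N) - (u n - u N) by ring.
  by apply: abs_sub_lt; exact: le_lt_trans (u_cauchy _ _ _) epsN.
move=> n; rewrite leNgt; apply/negP => tail_big.
have [N uN] := u_cvg _ (le_lt_trans (abs_ge0 _) tail_big).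
have := uN _ (leq_maxr n N); set M := maxn n N => uM.
suff: abs (limit u - u n) < abs (limit u - u n) by rewrite ltxx.
rewrite {1}(_ : limit u - u n = (u M - u n) - (u M - limit u)); last by ring.
apply: abs_sub_lt => //; exact: le_lt_trans (u_cauchy _ _ (leq_maxl n N)) tail_big.
Qed.

(** * Vectors and bounded operators *)

Section Vectors.
Variable X : Type.
Local Notation V := (qvec abs X).

Definition vbounded (u : X -> K) (r : R) := forall i, abs (u i) <= r.

Lemma qvec_ext (u v : V) : u =1 v -> u = v.
Proof.
case: u v => [u fu] [v fv] /= /funext uv; subst v.
by congr QVec; exact: Prop_irrelevance.
Qed.

Lemma op_ext (T S : V -> V) : (forall xi i, T xi i = S xi i) -> T = S.
Proof. by move=> TS; apply: funext => xi; apply: qvec_ext; exact: TS. Qed.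

Lemma ball_vec_fin (u : X -> K) : vbounded u 1 -> finite_set [set i | 1 < abs (u i)].
Proof.
move=> u1; apply: sub_finite_set (finite_set0 X) => i /=.
by rewrite ltNge u1.
Qed.

Definition ball_vec (u : X -> K) (u1 : vbounded u 1) : V := QVec (ball_vec_fin u1).

Lemma vec0_ball : vbounded (fun _ => 0) 1.
Proof. by move=> i; rewrite abs0 ler01. Qed.

Definition vec0 : V := ball_vec vec0_ball.

Lemma vecD_fin (u v : V) : finite_set [set i | 1 < abs (u i + v i)].
Proof.
have fin_uv : finite_set ([set i | 1 < abs (u i)] `|` [set i | 1 < abs (v i)]).
  by rewrite finite_setU; split; exact: qv_fin.
apply: sub_finite_set fin_uv => i /= uv1.
have [u1|u1] := ltP 1 (abs (u i)); [by left | have [v1|v1] := ltP 1 (abs (v i))].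
- by right.
- by move: uv1; rewrite ltNge abs_add_le.
Qed.

Definition vecD (u v : V) : V := QVec (vecD_fin u v).

Lemma vecN_fin (u : V) : finite_set [set i | 1 < abs (- u i)].
Proof. by under eq_set do rewrite absN; exact: qv_fin. Qed.

Definition vecN (u : V) : V := QVec (vecN_fin u).

Definition vecB (u v : V) : V := vecD u (vecN v).

Lemma qvec_bounded (xi : V) : exists a : K, a != 0 /\ vbounded xi (abs a).
Proof.
have /(@finite_fsetP {classic X}) [F hF] := qv_fin xi.
pose M := \sum_(j <- finmap.enum_fset F) abs (xi j) + 1.
have [n Mn] := Pexp_unbounded M.
exists (p%:R ^+ n)^-1; split; first by rewrite invr_eq0 pexp_neq0.
move=> i; rewrite absV abs_pexp invrK; apply/ltW/le_lt_trans/Mn.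
have [i1|i1] := ltP 1 (abs (xi i)); last first.
  by rewrite -[abs (xi i)]add0r lerD // sumr_ge0 // => j _; exact: abs_ge0.
have iF : i \in finmap.enum_fset F.
  by have : [set i | 1 < abs (xi i)] i by []; rewrite hF.
rewrite /M (big_rem _ iF) /= -addrA lerDl addr_ge0 ?ler01 //.
by rewrite sumr_ge0 // => j _; exact: abs_ge0.
Qed.

Lemma qvec_bounded2 (xi eta : V) :
  exists a : K, vbounded xi (abs a) /\ vbounded eta (abs a).
Proof.
have [a [_ xia]] := qvec_bounded xi; have [b [_ etab]] := qvec_bounded eta.
have [ab|ba] := leP (abs a) (abs b).
  by exists b; split=> // i; exact: le_trans (xia i) ab.
by exists a; split=> // i; exact: le_trans (etab i) (ltW ba).
Qed.

Lemma vnorm_le (u : X -> K) c : 0 <= c -> vbounded u c -> vnorm abs u <= c.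
Proof. by move=> c0 uc; apply: ge_sup; [exists 0; left | move=> y [->|[i _ <-]]]. Qed.

Lemma vnorm_ge (u : X -> K) c i : vbounded u c -> abs (u i) <= vnorm abs u.
Proof.
move=> uc; apply: ub_le_sup; last by right; exists i.
by exists (Num.max c 0) => y [->|[j _ <-]]; rewrite le_max ?lexx ?uc ?orbT.
Qed.

Lemma vnorm_le1 (xi : V) : vnorm abs xi <= 1 <-> vbounded xi 1.
Proof.
split=> [xi1 i|]; last by apply: vnorm_le; exact: ler01.
have [a [_ xia]] := qvec_bounded xi.
exact: le_trans (vnorm_ge i xia) xi1.
Qed.

Lemma opnorm_le (T : V -> (X -> K)) c : 0 <= c ->
  (forall xi : V, vbounded xi 1 -> vbounded (T xi) c) -> opnorm T <= c.
Proof.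
move=> c0 Tc; apply: ge_sup.
  by exists (vnorm abs (T vec0)), vec0 => //; apply/vnorm_le1; exact: vec0_ball.
by move=> _ [xi /vnorm_le1 xi1 <-]; apply: vnorm_le => //; exact: Tc.
Qed.

Lemma opnorm_ge (T : V -> (X -> K)) c (xi : V) i :
  (forall xi : V, vbounded xi 1 -> vbounded (T xi) c) ->
  vbounded xi 1 -> abs (T xi i) <= opnorm T.
Proof.
move=> Tc xi1; apply: le_trans (vnorm_ge i (Tc xi xi1)) _.
apply: ub_le_sup; last by exists xi => //; apply/vnorm_le1.
exists (Num.max c 0) => _ [eta /vnorm_le1 eta1 <-].
by apply: vnorm_le; rewrite ?le_max ?lexx ?orbT // => j; rewrite le_max Tc.
Qed.

Definition opD (T S : V -> V) (xi : V) : V := vecD (T xi) (S xi).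
Definition opB (T S : V -> V) (xi : V) : V := vecB (T xi) (S xi).

Section ZpLinear.
Variable T : V -> V.
Hypothesis T_lin : Zp_linear T.

Lemma Zp_linearD (x y z : V) : (forall i, z i = x i + y i) -> forall i, T z i = T x i + T y i.
Proof. by case: T_lin => TD _; exact: TD. Qed.

Lemma Zp_linear0 (z : V) : (forall i, z i = 0) -> forall i, T z i = 0.
Proof.
move=> z0 i; apply: (addrI (T z i)).
by rewrite addr0 -(@Zp_linearD z z z) // => j; rewrite z0 addr0.
Qed.

Lemma Zp_linearZ (a : K) (x z : V) : a != 0 -> (forall i, z i = a * x i) ->
  forall i, T z i = a * T x i.
Proof.
move=> a0 zax i; case: T_lin => _ TZ; have [a1|a1] := leP (abs a) 1; first exact: TZ.
have a_inv1 : in_Zp abs a^-1 by rewrite /in_Zp absV invf_le1 ?ltW // (lt_trans ltr01 a1).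
have xaz j : x j = a^-1 * z j by rewrite zax mulrA mulVf ?mul1r.
by rewrite (TZ _ _ _ a_inv1 xaz) mulrA mulfV ?mul1r.
Qed.

Lemma Zp_linearB (x y z : V) : (forall i, z i = x i - y i) -> forall i, T z i = T x i - T y i.
Proof.
move=> zxy i; apply: (addIr (T y i)).
by rewrite subrK -(@Zp_linearD z y x) // => j; rewrite zxy subrK.
Qed.

Lemma Zp_linear_vecD u v i : T (vecD u v) i = T u i + T v i.
Proof. exact: Zp_linearD. Qed.

Lemma Zp_linear_vecB u v i : T (vecB u v) i = T u i - T v i.
Proof. exact: Zp_linearB. Qed.

End ZpLinear.

(* Radii are taken in the value group |K^*|, so that a vector of the ball of radius |a|
   can be rescaled into the unit ball. *)
Definition bounded_by (T : V -> V) (c : K) :=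
  forall (xi : V) (a : K), vbounded xi (abs a) -> vbounded (T xi) (abs (c * a)).

Lemma bounded_by_ball T c : Zp_linear T ->
  (forall xi : V, vbounded xi 1 -> vbounded (T xi) (abs c)) -> bounded_by T c.
Proof.
move=> T_lin Tc xi a xia i; have [a0|a0] := eqVneq a 0.
  rewrite (@Zp_linear0 T T_lin xi) ?abs0 ?abs_ge0 // => j.
  by apply/abs_eq0/eqP; rewrite eq_le abs_ge0 andbT -abs0 -a0.
have eta1 : vbounded (fun j => a^-1 * xi j) 1.
  by move=> j; rewrite absM absV ler_pdivrMl ?abs_gt0 // mulr1.
rewrite (@Zp_linearZ T T_lin a (ball_vec eta1) xi a0); last first.
  by move=> j; rewrite /= mulrA mulfV ?mul1r.
rewrite !absM mulrC; apply: ler_wpM2r; [exact: abs_ge0 | exact: Tc].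
Qed.

Lemma bounded_by_comp S T c d : bounded_by S c -> bounded_by T d -> bounded_by (S \o T) (c * d).
Proof. by move=> Sc Td xi a xia; rewrite -mulrA; apply/Sc/Td. Qed.

Lemma bounded_by_iter T c n : bounded_by T c -> bounded_by (iter n T) (c ^+ n).
Proof.
move=> Tc; elim: n => [|n IH] xi a xia /=; first by rewrite expr0 mul1r.
by rewrite exprS; apply: bounded_by_comp.
Qed.

Lemma bounded_by_le T c d : abs c <= abs d -> bounded_by T c -> bounded_by T d.
Proof.
move=> cd Tc xi a xia i; apply: le_trans (Tc xi a xia i) _.
by rewrite !absM ler_wpM2r ?abs_ge0.
Qed.

Lemma bounded_by_opB S T c : bounded_by S c -> bounded_by T c -> bounded_by (opB S T) c.
Proof. by move=> Sc Tc xi a xia i; apply: abs_sub_le; [exact: Sc | exact: Tc]. Qed.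

Definition small_on (F : set X) (eps : R) : set V :=
  [set y | vbounded y 1 /\ forall i, F i -> abs (y i) < eps].

Lemma small_on_open F eps : finite_set F -> 0 < eps -> tau_open (small_on F eps).
Proof.
move=> finF eps0 Q finQ a SQa [a1 a_eps].
exists (Q `|` F); split; first by rewrite finite_setU.
exists (Num.min 1 eps); split; first by rewrite lt_min ltr01 eps0.
move=> b SQb ba; have bi i : b i = a i + (b i - a i) by rewrite addrC subrK.
split=> [i|i Fi].
  have [Qi|nQi] := pselect (Q i); last exact: SQb.
  move: (ba i (or_introl Qi)); rewrite lt_min => /andP [ba1 _].
  by rewrite bi abs_add_le // ltW.
move: (ba i (or_intror Fi)); rewrite lt_min => /andP [_ ba_eps].
by rewrite bi abs_add_lt // a_eps.
Qed.

Lemma inB_near0 T F eps : in_B T -> finite_set F -> 0 < eps -> exists G d, finite_set G /\ 0 < d /\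
  forall y : V, vbounded y 1 -> (forall i, G i -> abs (y i) < d) -> small_on F eps (T y).
Proof.
move=> [T_lin Tcont] finF eps0.
have S0 : in_SP set0 vec0 by move=> j _; exact: vec0_ball.
have T0_small : (T @^-1` small_on F eps) vec0.
  split=> i; rewrite (Zp_linear0 T_lin (z := vec0)) // abs0 // => _; exact: ler01.
have [G [finG [d [d0 Gd]]]] :=
  Tcont _ (small_on_open finF eps0) set0 (finite_set0 X) vec0 S0 T0_small.
exists G, d; do 2!split=> //; move=> y y1 yd; apply: Gd => [j _|i Gi]; first exact: y1.
by rewrite /= subr0; exact: yd.
Qed.

Lemma inB_bounded T : in_B T -> exists n, forall xi : V, vbounded xi 1 -> vbounded (T xi) (P ^+ n).
Proof.
move=> T_inB; have [G [d [_ [d0 Gd]]]] := inB_near0 T_inB (finite_set0 X) ltr01.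
have [n pn_small] := invPexp_lt d0.
exists n => xi xi1 i.
have eta1 : vbounded (fun j => p%:R ^+ n * xi j) 1.
  move=> j; rewrite absM abs_pexp; apply: mulr_ile1 => //;
    [exact: invPexp_ge0 | exact: abs_ge0 | exact: invPexp_le1].
have [eta_ball _] : small_on set0 1 (T (ball_vec eta1)).
  apply: Gd => // j _; apply: le_lt_trans pn_small.
  by rewrite /= absM abs_pexp ler_piMr ?invPexp_ge0.
move: (eta_ball i); rewrite (Zp_linearZ T_inB.1 (pexp_neq0 n) (x := xi)) // absM abs_pexp.
by rewrite mulrC -ler_pdivlMr ?invr_gt0 ?Pexp_gt0 // invrK mul1r.
Qed.

(** * Uniform limits of operators *)

Lemma tau_continuous_uniform_limit T (S : nat -> V -> V) : Zp_linear T ->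
  (forall n, in_B (S n)) -> (forall n, bounded_by (opB T (S n)) (p%:R ^+ n)) ->
  tau_continuous T.
Proof.
move=> T_lin S_inB TS U U_open Q finQ a SQa Ua.
have SQ'Ta : in_SP [set i | 1 < abs (T a i)] (T a).
  by move=> j; rewrite /in_Zp leNgt => /negP.
have [F [finF [eps [eps0 Ueps]]]] := U_open _ (qv_fin (T a)) _ SQ'Ta Ua.
have [n eps_n] := invPexp_lt eps0.
have [G [d [finG [d0 Gd]]]] := inB_near0 (S_inB n) finF eps0.
exists (Q `|` G); split; first by rewrite finite_setU.
exists (Num.min 1 d); split; first by rewrite lt_min ltr01 d0.
move=> b SQb ba.
(* T b = T a + S n (b - a) + (T - S n) (b - a), the last term being uniformly small. *)
have ba1 : vbounded (fun i => b i - a i) 1.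
  move=> i; have [Qi|nQi] := pselect (Q i).
    by have := ba i (or_introl Qi); rewrite lt_min => /andP [/ltW].
  by apply: abs_sub_le; [exact: SQb | exact: SQa].
pose y := ball_vec ba1.
have [Sy1 Sy_eps] : small_on F eps (S n y).
  by apply: Gd => // i Gi; have := ba i (or_intror Gi); rewrite lt_min => /andP [].
have TSy i : abs (T y i - S n y i) <= (P ^+ n)^-1.
  by have := TS n y 1 _ i; rewrite abs1 mulr1 abs_pexp; apply.
have Tb i : T b i = T a i + (S n y i + (T y i - S n y i)).
  rewrite [S n y i + _]addrC subrK.
  by apply: (Zp_linearD T_lin) => j; rewrite /= addrC subrK.
apply: Ueps => [j nj|i Fi].
  rewrite /in_Zp Tb; apply: abs_add_le; first by rewrite leNgt; apply/negP.
  by apply: abs_add_le; [exact: Sy1 | exact: le_trans (TSy j) (invPexp_le1 n)].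
rewrite Tb addrC addKr; apply: abs_add_lt; first exact: Sy_eps.
exact: le_lt_trans (TSy i) eps_n.
Qed.

Section UniformLimit.
Variable S : nat -> V -> V.
Hypothesis S_inB : forall n, in_B (S n).
Hypothesis S_cauchy : forall n m, (n <= m)%N -> bounded_by (opB (S m) (S n)) (p%:R ^+ n).

Definition lim_fun (xi : V) (i : X) : K := limit (fun n => S n xi i).

Lemma lim_fun_tail n (xi : V) a :
  vbounded xi (abs a) -> forall i, abs (lim_fun xi i - S n xi i) <= abs (p%:R ^+ n * a).
Proof. by move=> xia i; apply: limit_pexp_tail => k m km; exact: S_cauchy km xi a xia i. Qed.

Lemma lim_fun_fin (xi : V) : finite_set [set i | 1 < abs (lim_fun xi i)].
Proof.
have [a [_ xia]] := qvec_bounded xi; have [n an1] := abs_pexp_lt a ltr01.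
apply: sub_finite_set (qv_fin (S n xi)) => i /=; rewrite !ltNge; apply: contra => Sn1.
rewrite -(subrK (S n xi i) (lim_fun xi i)); apply: abs_add_le => //.
exact: le_trans (lim_fun_tail n xia i) (ltW an1).
Qed.

Definition lim_op (xi : V) : V := QVec (lim_fun_fin xi).

Lemma lim_op_tail n : bounded_by (opB lim_op (S n)) (p%:R ^+ n).
Proof. by move=> xi a xia i; exact: lim_fun_tail. Qed.

Lemma lim_op_linear : Zp_linear lim_op.
Proof.
split=> [x y z zxy|b x z b1 zbx] i; apply/eqP; rewrite -subr_eq0; apply/eqP.
  have [a [xa ya]] := qvec_bounded2 x y.
  have za : vbounded z (abs a) by move=> j; rewrite zxy abs_add_le.
  apply: (eq0_of_abs_le_pexp (a := a)) => n.
  have -> : lim_op z i - (lim_op x i + lim_op y i) =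
      (lim_fun z i - S n z i) - (lim_fun x i - S n x i) - (lim_fun y i - S n y i).
    by rewrite (Zp_linearD (S_inB n).1 zxy); rewrite /=; ring.
  by apply: abs_sub_le; [apply: abs_sub_le|]; exact: lim_fun_tail.
have [a [_ xa]] := qvec_bounded x.
have za : vbounded z (abs a).
  by move=> j; rewrite zbx absM; apply: le_trans (xa j); apply: ler_piMl; [exact: abs_ge0|].
apply: (eq0_of_abs_le_pexp (a := a)) => n.
have -> : lim_op z i - b * lim_op x i =
    (lim_fun z i - S n z i) - b * (lim_fun x i - S n x i).
  by rewrite (proj2 (S_inB n).1 _ _ _ b1 zbx) /=; ring.
apply: abs_sub_le; first exact: lim_fun_tail.
rewrite absM; apply: le_trans (lim_fun_tail n xa i); apply: ler_piMl => //; exact: abs_ge0.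
Qed.

Lemma lim_op_inB : in_B lim_op.
Proof.
split; first exact: lim_op_linear.
exact: tau_continuous_uniform_limit lim_op_linear S_inB lim_op_tail.
Qed.

End UniformLimit.

(** * Near idempotents *)

Lemma opnorm_lt_bounded_by T c : in_B T ->
  opnorm (fun xi => (T xi : X -> K)) < abs c -> bounded_by T (p%:R * c).
Proof.
move=> T_inB Tc; apply: (bounded_by_ball T_inB.1) => xi xi1 i.
have [n Tn] := inB_bounded T_inB.
rewrite absM abs_p mulrC; apply: abs_lt_discrete.
exact: le_lt_trans (opnorm_ge _ Tn xi1) Tc.
Qed.

Lemma idempotent_eq0 e : e \o e = e -> bounded_by e p%:R -> forall xi i, e xi i = 0.
Proof.
move=> ee ep; have epn n : bounded_by e (p%:R ^+ n.+1).
  elim: n => [|n IH]; first by rewrite expr1.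
  by rewrite -ee exprS; apply: bounded_by_comp.
move=> xi i; have [a [_ xia]] := qvec_bounded xi.
apply: (eq0_of_abs_le_pexp (a := p%:R * a)) => n.
by rewrite mulrA -exprSr; exact: epn n xi a xia i.
Qed.

Lemma idempotent_sharp_bound e : in_B e -> e \o e = e -> (exists xi i, e xi i <> 0) ->
  exists k, bounded_by e (p%:R ^+ k)^-1 /\ P ^+ k <= opnorm (fun xi => (e xi : X -> K)).
Proof.
move=> e_inB ee [xi0 [i0 e0]].
pose Q k := bounded_by e (p%:R ^+ k)^-1.
have exQ : exists k, `[< Q k >].
  have [k ek] := inB_bounded e_inB; exists k; apply/asboolP; rewrite /Q.
  by apply: (bounded_by_ball e_inB.1) => xi xi1 i; rewrite absV abs_pexp invrK; exact: ek.
have [k /asboolP ek k_min] := ex_minnP exQ; exists k; split=> //.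
rewrite leNgt; apply/negP => small.
(* Otherwise e is bounded by p^-(k-1), against the minimality of k, or, if k = 0, by p. *)
have := opnorm_lt_bounded_by (c := (p%:R ^+ k)^-1) e_inB.
rewrite absV abs_pexp invrK => /(_ small); case: k {ek small} k_min => [|k] k_min.
  by rewrite expr0 invr1 mulr1 => ep; apply/e0/(idempotent_eq0 ee ep).
rewrite exprS invfM mulrA mulfV ?p_neq0 // mul1r => ek.
by have := k_min k (asboolT ek); rewrite ltnn.
Qed.

Definition xor_op (e f : V -> V) : V -> V := opB (opD e f) (opD (e \o f) (e \o f)).

(* The classical intertwiner ef + (1 - e)(1 - f) of two idempotents. *)
Definition intertwiner (e f : V -> V) : V -> V := opB id (xor_op e f).

Section Intertwiner.
Variables e f : V -> V.
Hypotheses (e_lin : Zp_linear e) (ee : e \o e = e) (ff : f \o f = f).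

Let eeE xi : e (e xi) = e xi. Proof. by have := congr1 (fun g => g xi) ee. Qed.
Let ffE xi : f (f xi) = f xi. Proof. by have := congr1 (fun g => g xi) ff. Qed.

Lemma intertwinerP : e \o intertwiner e f = intertwiner e f \o f.
Proof.
apply: op_ext => xi i; rewrite /= /intertwiner /xor_op /opB /opD.
rewrite !(Zp_linear_vecB e_lin, Zp_linear_vecD e_lin) /= !eeE !ffE; ring.
Qed.

Lemma xor_op_bounded c d : bounded_by e c -> bounded_by (opB e f) d -> abs d <= abs c ->
  bounded_by (xor_op e f) (c * d).
Proof.
set g := opB e f => ec gd dc.
have xorE : xor_op e f = opB (e \o g) (g \o f).
  apply: op_ext => xi i; rewrite /= /xor_op /g /opB /opD.
  rewrite !(Zp_linear_vecB e_lin, Zp_linear_vecD e_lin) /= !eeE !ffE; ring.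
have fc : bounded_by f c.
  rewrite (_ : f = opB e g); last by apply: op_ext => xi i; rewrite /g /=; ring.
  exact: bounded_by_opB ec (bounded_by_le dc gd).
rewrite xorE; apply: bounded_by_opB; first exact: bounded_by_comp.
by rewrite mulrC; exact: bounded_by_comp.
Qed.

End Intertwiner.

Lemma near_idempotents_xor_bounded e f : in_B e -> in_B (opB e f) ->
  e \o e = e -> f \o f = f -> (exists xi i, e xi i <> 0) ->
  opnorm (fun xi => (opB e f xi : X -> K)) < (opnorm (fun xi => (e xi : X -> K)))^-1 ->
  bounded_by (xor_op e f) p%:R.
Proof.
move=> e_inB ef_inB ee ff e_nz ef_small.
have [k [e_k e_norm]] := idempotent_sharp_bound e_inB ee e_nz.
have ef_k : bounded_by (opB e f) (p%:R ^+ k.+1).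
  rewrite exprS; apply: opnorm_lt_bounded_by ef_inB _.
  rewrite abs_pexp; apply: lt_le_trans ef_small _.
  have e_norm_gt0 := lt_le_trans (Pexp_gt0 k) e_norm.
  by rewrite lef_pV2 ?posrE ?Pexp_gt0.
have k_le : abs (p%:R ^+ k.+1) <= abs (p%:R ^+ k)^-1.
  by rewrite absV !abs_pexp invrK (le_trans (invPexp_le1 _)) ?Pexp_ge1.
have := xor_op_bounded e_inB.1 ee ff e_k ef_k k_le.
by rewrite exprSr mulrA mulVf ?mul1r ?pexp_neq0.
Qed.

Section Subalgebra.
Variable A : set (V -> V).
Hypotheses (A_sub : unital_subalgebra A) (A_closed : norm_closed A).

Lemma subalgebra_inB T : A T -> in_B T. Proof. by case: A_sub => inB _; exact: inB. Qed.
Lemma subalgebra_id : A id. Proof. by case: A_sub => _ []. Qed.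
Lemma subalgebra_comp T S : A T -> A S -> A (T \o S).
Proof. by case: A_sub => _ [] _ [] _ [] _; apply. Qed.

Lemma subalgebra_opD T S : A T -> A S -> A (opD T S).
Proof.
case: A_sub => _ [] _ [] AD _ AT AS; have [U [AU UTS]] := AD _ _ AT AS.
by rewrite (_ : opD T S = U) //; apply: op_ext => xi i; rewrite UTS.
Qed.

Lemma subalgebra_scale (a : K) T : abs a <= 1 -> A T ->
  exists U, A U /\ forall xi i, U xi i = a * T xi i.
Proof. by case: A_sub => _ [] _ [] _ [] AZ _; exact: AZ. Qed.

Lemma subalgebra_opB T S : A T -> A S -> A (opB T S).
Proof.
move=> AT AS; have N1 : abs (-1 : K) <= 1 by rewrite absN abs1.
have [N [AN NS]] := subalgebra_scale N1 AS.
rewrite (_ : opB T S = opD T N); first exact: subalgebra_opD.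
by apply: op_ext => xi i; rewrite /= NS mulN1r.
Qed.

Lemma subalgebra_zero : A (fun _ => vec0).
Proof.
have Z1 : abs (0 : K) <= 1 by rewrite abs0 ler01.
have [Z [AZ Z0]] := subalgebra_scale Z1 subalgebra_id.
by rewrite (_ : (fun _ => vec0) = Z) //; apply: op_ext => xi i; rewrite Z0 mul0r.
Qed.

Lemma subalgebra_lim_op (S : nat -> V -> V)
  (S_cauchy : forall n m, (n <= m)%N -> bounded_by (opB (S m) (S n)) (p%:R ^+ n)) :
  (forall n, A (S n)) -> A (lim_op S_cauchy).
Proof.
move=> AS; have S_inB n := subalgebra_inB (AS n).
apply: A_closed; first exact: lim_op_inB.
move=> eps eps0; have [n eps_n] := invPexp_lt eps0.
exists (S n); split=> //; apply: le_lt_trans eps_n; apply: opnorm_le => [|xi xi1 i].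
  exact: invPexp_ge0.
rewrite /op_sub -absN opprB.
have tail := lim_op_tail S_cauchy n.
by have := tail xi 1 _ i; rewrite abs1 mulr1 abs_pexp; apply.
Qed.

(** * Neumann series *)

Section Neumann.
Variable w : V -> V.
Hypotheses (Aw : A w) (w_p : bounded_by w p%:R).

Let w_lin : Zp_linear w := (subalgebra_inB Aw).1.

Fixpoint neumann_sum n : V -> V :=
  if n is n'.+1 then opD id (w \o neumann_sum n') else fun _ => vec0.

Lemma neumann_sum_in n : A (neumann_sum n).
Proof.
elim: n => [|n IH] /=; first exact: subalgebra_zero.
by apply: subalgebra_opD; [exact: subalgebra_id | exact: subalgebra_comp].
Qed.

Lemma neumann_sumS n xi i : neumann_sum n.+1 xi i = neumann_sum n xi i + iter n w xi i.
Proof.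
elim: n xi i => [|n IH] xi i /=.
  by rewrite add0r (Zp_linear0 w_lin (z := vec0)) ?addr0.
by rewrite (Zp_linearD w_lin (IH xi)) addrA.
Qed.

Lemma neumann_sum_cauchy n m : (n <= m)%N ->
  bounded_by (opB (neumann_sum m) (neumann_sum n)) (p%:R ^+ n).
Proof.
move=> /subnK <-; elim: (m - n)%N => [|k IH] xi a xia i.
  by rewrite /= subrr abs0 abs_ge0.
have := neumann_sumS (k + n) xi i; rewrite /= => ->.
rewrite addrAC; apply: abs_add_le; first exact: IH.
exact: le_trans (bounded_by_iter _ w_p xia i) (abs_pexpM_le _ (leq_addl k n)).
Qed.

Definition neumann_inv : V -> V := lim_op neumann_sum_cauchy.

Lemma neumann_inv_in : A neumann_inv.
Proof. exact: subalgebra_lim_op neumann_sum_in. Qed.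

Local Notation z := (opB id w).

Lemma opB_id_bounded : bounded_by z 1.
Proof.
apply: bounded_by_opB => [xi a xia|]; first by rewrite mul1r.
by apply: bounded_by_le w_p; rewrite abs1 abs_p ltW ?invP_lt1.
Qed.

Lemma opB_id_neumann_sum n xi i : z (neumann_sum n xi) i = xi i - iter n w xi i.
Proof.
have := neumann_sumS n xi i; rewrite /= => Sn1.
by rewrite (_ : w _ i = neumann_sum n xi i + iter n w xi i - xi i); [ring | rewrite -Sn1; ring].
Qed.

Lemma neumann_sum_opB_id n xi i : neumann_sum n (z xi) i = xi i - iter n w xi i.
Proof.
elim: n i => [|n IH] i /=; first by rewrite subrr.
rewrite (Zp_linearB w_lin IH) /=; ring.
Qed.

Let z_lin : Zp_linear z := (subalgebra_inB (subalgebra_opB subalgebra_id Aw)).1.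

Lemma neumann_invK : cancel z neumann_inv.
Proof.
move=> xi; apply: qvec_ext => i; apply/eqP; rewrite -subr_eq0; apply/eqP.
have [a [_ xia]] := qvec_bounded xi.
apply: (eq0_of_abs_le_pexp (a := a)) => n.
have tail := lim_op_tail neumann_sum_cauchy n.
have -> : neumann_inv (z xi) i - xi i =
    (neumann_inv (z xi) i - neumann_sum n (z xi) i) - iter n w xi i.
  by rewrite neumann_sum_opB_id; ring.
apply: abs_sub_le; last exact: (bounded_by_iter n w_p xia i).
by have := tail (z xi) (1 * a) (opB_id_bounded xia) i; rewrite mul1r.
Qed.

Lemma neumann_invVK : cancel neumann_inv z.
Proof.
move=> xi; apply: qvec_ext => i; apply/eqP; rewrite -subr_eq0; apply/eqP.
have [a [_ xia]] := qvec_bounded xi.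
apply: (eq0_of_abs_le_pexp (a := a)) => n.
have tail := lim_op_tail neumann_sum_cauchy n.
pose d := opB neumann_inv (neumann_sum n) xi.
have -> : z (neumann_inv xi) i - xi i = z d i - iter n w xi i.
  rewrite (Zp_linearD z_lin (x := neumann_sum n xi) (y := d)) ?opB_id_neumann_sum; first ring.
  by move=> j; rewrite /= addrC subrK.
apply: abs_sub_le; last exact: (bounded_by_iter n w_p xia i).
by have := opB_id_bounded (tail xi a xia) i; rewrite mul1r.
Qed.

End Neumann.

End Subalgebra.

End Vectors.
End PadicAbsolute.

Theorem lemma3p6 (p : nat) (R : realType) (K : fieldType) (abs : K -> R)
  (X : countType) (A : set (qvec abs X -> qvec abs X))
  (e f : qvec abs X -> qvec abs X) :
  prime p ->
  is_padic_field p abs ->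
  unital_subalgebra A ->
  norm_closed A ->
  A e -> A f ->
  e \o e = e -> f \o f = f ->
  (exists (xi : qvec abs X) (i : X), e xi i <> 0) ->
  opnorm (op_sub e f) < (opnorm (fun xi => (e xi : X -> K)))^-1 ->
  exists g ginv : qvec abs X -> qvec abs X,
    A g /\ A ginv /\ g \o ginv = id /\ ginv \o g = id /\
    ginv \o e \o g = f.
Proof.
move=> p_prime padicK A_sub A_closed Ae Af ee ff e_nz ef_small.
have e_inB := subalgebra_inB A_sub Ae.
have ef_inB := subalgebra_inB A_sub (subalgebra_opB padicK A_sub Ae Af).
have w_p := near_idempotents_xor_bounded p_prime e_inB ef_inB ee ff e_nz ef_small.
have Aw : A (xor_op padicK e f).
  by apply: subalgebra_opB => //; apply: subalgebra_opD => //; exact: subalgebra_comp.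
exists (intertwiner padicK e f), (neumann_inv p_prime padicK A_sub Aw w_p).
split; first exact: subalgebra_opB (subalgebra_id A_sub) Aw.
split; first exact: neumann_inv_in.
split; first exact/funext/neumann_invVK.
split; first exact/funext/neumann_invK.
apply: funext => xi /=.
by rewrite -[e _]/((e \o _) xi) (intertwinerP padicK e_inB.1 ee ff) /= neumann_invK.
Qed.
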